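(* Let $\mathcal{P}=\{1,\dots,M\}$, $i\in\mathcal{P}$, $i'\notin\mathcal{P}$, $\mathcal{P}^R=\mathcal{P}\cup\{i'\}$, and $D\subseteq\mathcal{P}$ nonempty. For each $j\in\mathcal{P}^R$ let $g_j\colon 2^{\mathcal{P}^R}\to\mathbb{R}_{\ge0}$ be monotone, supermodular and replication-invariant ($g_j(T\cup\{i,i'\})=g_j(T\cup\{i\})=g_j(T\cup\{i'\})$ for all $T\subseteq\mathcal{P}^R$), with $g_{i'}=g_i$ and $\sum_{j\in D}g_j(\mathcal{P})>0$. Define $w(S)=\sum_{j\in D}g_j(S)+\sum_{j\in S}(g_j(S)-g_j(\{j\}))$ for $S\subseteq\mathcal{P}^R$, $a_j=g_j(\mathcal{P})-g_j(\{j\})$ for $j\in\mathcal{P}$, and $A=\sum_{j\in\mathcal{P}}a_j$; assume $A>0$. Let $\phi(i)$ be the normalized Shapley value of $i$ for $w$ restricted to $2^{\mathcal{P}}$ and $\phi^R(i)$ that for $w$ on $2^{\mathcal{P}^R}$. Then $$\phi^R(i)\le\frac{\phi(i)A+a_i}{2(A+a_i)},$$ i.e. $t^R=2(\phi^R(i)(A+a_i)-a_i)\le t=\phi(i)A-a_i$.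
   Context: Normalized Shapley values: $\phi(i)=\frac{1}{w(\mathcal{P})}\sum_{S\subseteq\mathcal{P}\setminus\{i\}}\frac{|S|!(M-|S|-1)!}{M!}\big(w(S\cup\{i\})-w(S)\big)$ and $\phi^R(i)=\frac{1}{w(\mathcal{P}^R)}\sum_{S\subseteq\mathcal{P}^R\setminus\{i\}}\frac{|S|!(M-|S|)!}{(M+1)!}\big(w(S\cup\{i\})-w(S)\big)$. Setting: each party $j$ has validation data $V_j$, $g_j(S)$ is the performance on $V_j$ of the model trained on the relevant training data of parties in $S$, $D$ indexes the distinct validation tasks (the replica's task equals $i$'s, so $D$ is unchanged), $a_j$ is party $j$'s gain, party $j$ receives payout $A\phi(j)$ and pays $a_j$. *)

(* Parties of P^R are encoded as option 'I_M:
   Some j (j : 'I_M) is party j of P = {1..M}, None is the replica i'. *)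
From HB Require Import structures.
From mathcomp Require Import all_boot all_order all_algebra.
Set Implicit Arguments. Unset Strict Implicit. Unset Printing Implicit Defensive.
Import Order.TTheory GRing.Theory Num.Theory.
Local Open Scope ring_scope.

Definition partiesP (M : nat) : {set option 'I_M} := [set Some j | j : 'I_M].

Definition nshapley (R : realFieldType) (T : finType) (n : nat) (N : {set T})
  (w : {set T} -> R) (i : T) : R :=
  (w N)^-1 * \sum_(S in powerset (N :\ i))
      ((#|S|`! * (n - #|S| - 1)`!)%:R / (n`!)%:R) * (w (i |: S) - w S).

Definition wgame (R : realFieldType) (M : nat) (g : option 'I_M -> {set option 'I_M} -> R)
  (D : {set 'I_M}) (S : {set option 'I_M}) : R :=
  \sum_(j in D) g (Some j) S + \sum_(j in S) (g j S - g j [set j]).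

Definition gain (R : realFieldType) (M : nat) (g : option 'I_M -> {set option 'I_M} -> R)
  (j : 'I_M) : R :=
  g (Some j) (partiesP M) - g (Some j) [set Some j].

(* Supermodularity and monotonicity turn replication invariance into dummyness:
   g_j(S + i) + g_j(S + i') <= g_j(S + i + i') + g_j(S) collapses to g_j(S + i) <= g_j(S),
   so every g_j ignores both i and its replica i'.  Hence the marginal contribution of i
   to w is g_i(S) - g_i({i}), which lies in [0, a_i] and does not see i'; i' is thus a
   null player for i's marginals, and the unnormalised Shapley sums of i in P and in P^R
   are the same number x in [0, a_i].  Only the normalisation changes, from w(P) >= A to
   w(P^R) = w(P) + a_i, and the claim becomes an elementary inequality in x, A, a_i, w(P). *)

From HB Require Import structures.
From mathcomp Require Import all_boot all_order all_algebra.
From mathcomp Require Import zify ring lra.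
Import Order.TTheory GRing.Theory Num.Theory.
Local Open Scope ring_scope.
Set Implicit Arguments. Unset Strict Implicit.

Lemma big_powersetU1 (R : nmodType) (T : finType) (a : T) (B : {set T})
    (F : {set T} -> R) :
  a \notin B -> \sum_(S in powerset (a |: B)) F S
                = \sum_(S in powerset B) (F S + F (a |: S)).
Proof.
move=> aB; have notin_sub (S : {set T}) : S \subset B -> a \notin S.
  by move=> sSB; apply: contra aB => /(subsetP sSB).
rewrite big_split (bigID (fun S : {set T} => a \in S)) /= addrC; congr (_ + _).
  apply: eq_bigl => S; rewrite !inE; apply/andP/idP => [[sSaB aS] | sSB].
    apply/subsetP => x xS; move/subsetP/(_ x xS): sSaB; rewrite !inE.
    by case: eqP => // xa; rewrite -xa xS in aS.
  by rewrite notin_sub // (subset_trans sSB) ?subsetUr.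
have inj : {in powerset B &, injective (fun S => a |: S)}.
  move=> S1 S2; rewrite !inE => /notin_sub aS1 /notin_sub aS2 eS.
  by rewrite -(setU1K aS1) -(setU1K aS2) eS.
rewrite -(big_imset F inj); apply: eq_bigl => S; apply/andP/imsetP.
  move=> [sSaB aS]; exists (S :\ a); last by rewrite setD1K.
  by rewrite inE subDset -powersetE.
by move=> [S' sS'B ->]; rewrite inE setU11 setUS // -powersetE.
Qed.

Section ShapleyWeights.
Variable R : realFieldType.

Definition shapley_weight (n s : nat) : R := (s`! * (n - s - 1)`!)%:R / (n`!)%:R.

Definition shapley_sum (T : finType) (n : nat) (N : {set T}) (w : {set T} -> R) (i : T) :=
  \sum_(S in powerset (N :\ i)) shapley_weight n #|S| * (w (i |: S) - w S).

Lemma nshapleyE (T : finType) n (N : {set T}) w i :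
  nshapley n N w i = (w N)^-1 * shapley_sum n N w i.
Proof. by []. Qed.

Lemma shapley_weight_ge0 n s : 0 <= shapley_weight n s.
Proof. by rewrite divr_ge0 ?ler0n. Qed.

Lemma shapley_weightS n s : (s < n)%N ->
  shapley_weight n.+1 s + shapley_weight n.+1 s.+1 = shapley_weight n s.
Proof.
move=> lt_sn; have [k ->] : exists k, n = (s + k).+1 by exists (n - s.+1)%N; lia.
rewrite /shapley_weight.
have -> : ((s + k).+2 - s - 1 = k.+1)%N by lia.
have -> : ((s + k).+2 - s.+1 - 1 = k)%N by lia.
have fact_neq0 m : (m`!)%:R != 0 :> R by rewrite pnatr_eq0 -lt0n fact_gt0.
rewrite !factS !natrM -!natr1 !natrD.
have s_ge0 : 0 <= s%:R :> R := ler0n _ _; have k_ge0 : 0 <= k%:R :> R := ler0n _ _.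
by field; rewrite ?fact_neq0 // gt_eqF //; lra.
Qed.

Lemma sum_shapley_weightU1 (T : finType) (a : T) (B : {set T}) n (F : {set T} -> R) :
    a \notin B -> (#|B| < n)%N -> (forall S : {set T}, S \subset B -> F (a |: S) = F S) ->
  \sum_(S in powerset (a |: B)) shapley_weight n.+1 #|S| * F S
    = \sum_(S in powerset B) shapley_weight n #|S| * F S.
Proof.
move=> aB ltBn dummy_a; rewrite big_powersetU1 //.
apply: eq_bigr => S; rewrite inE => sSB.
have aS : a \notin S by apply: contra aB => /(subsetP sSB).
rewrite dummy_a // cardsU1 aS add1n -mulrDl shapley_weightS //.
exact: leq_ltn_trans (subset_leq_card sSB) ltBn.
Qed.

Lemma sum_shapley_weight (T : finType) n (B : {set T}) :
  #|B| = n -> \sum_(S in powerset B) shapley_weight n.+1 #|S| = 1.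
Proof.
elim: n B => [|n IHn] B cardB.
  by rewrite (cards0_eq cardB) powerset0 big_set1 cards0 /shapley_weight divr1.
have [a aB] : exists a, a \in B by apply/set0Pn; rewrite -card_gt0 cardB.
have aBa : a \notin B :\ a by rewrite !inE eqxx.
have cardBa : #|B :\ a| = n by move: cardB; rewrite (cardsD1 a B) aB => -[].
rewrite -(setD1K aB).
under eq_bigr do rewrite -[shapley_weight _ _]mulr1.
rewrite (sum_shapley_weightU1 (n := n.+1) (F := fun=> 1)) ?cardBa //.
under eq_bigr do rewrite mulr1; exact: IHn.
Qed.

Lemma shapley_sum_dummy (T : finType) n (N : {set T}) w (i b : T) :
    i \in N -> b \notin N -> #|N| = n ->
    (forall S : {set T}, S \subset N :\ i -> w (i |: (b |: S)) - w (b |: S) = w (i |: S) - w S) ->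
  shapley_sum n.+1 (b |: N) w i = shapley_sum n N w i.
Proof.
move=> iN bN cardN dummy_b; rewrite /shapley_sum.
have bi : b != i by apply: contraNneq bN => ->.
have -> : (b |: N) :\ i = b |: (N :\ i).
  apply/setP => x; rewrite !inE.
  by have [->|//] := eqVneq x i; rewrite eq_sym (negPf bi).
apply: sum_shapley_weightU1 => //; first by rewrite !inE negb_and bN orbT.
by rewrite -cardN (cardsD1 i N) iN.
Qed.

Lemma shapley_sum_bounds (T : finType) n (N : {set T}) w (i : T) (c : R) :
    i \in N -> #|N| = n ->
    (forall S : {set T}, S \subset N :\ i -> 0 <= w (i |: S) - w S <= c) ->
  0 <= shapley_sum n N w i <= c.
Proof.
move=> iN cardN marg_bounds.
have cardNi : #|N :\ i| = n.-1 by rewrite -cardN (cardsD1 i N) iN.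
have n_gt0 : (0 < n)%N by rewrite -cardN (cardsD1 i N) iN.
have sum_weights : \sum_(S in powerset (N :\ i)) shapley_weight n #|S| = 1.
  by rewrite -(sum_shapley_weight cardNi) prednK.
apply/andP; split.
  apply: sumr_ge0 => S; rewrite inE => /marg_bounds /andP[ge0 _].
  exact: mulr_ge0 (shapley_weight_ge0 _ _) ge0.
rewrite -[c]mul1r -sum_weights mulr_suml; apply: ler_sum => S.
rewrite inE => /marg_bounds /andP[_ le_c].
by rewrite ler_wpM2l ?shapley_weight_ge0.
Qed.

End ShapleyWeights.

Lemma replica_share_le (R : realFieldType) (W A a x : R) :
    0 < A -> a <= A -> A <= W -> 0 <= x <= a ->
  (W + a)^-1 * x <= (W^-1 * x * A + a) / (2 * (A + a)).
Proof.
move=> A_gt0 aA AW /andP[x_ge0 xa].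
have a_ge0 : 0 <= a by apply: le_trans xa.
have W_neq0 : W != 0 by rewrite gt_eqF //; lra.
have Wa_neq0 : W + a != 0 by rewrite gt_eqF //; lra.
have Aa_neq0 : A + a != 0 by rewrite gt_eqF //; lra.
rewrite -subr_ge0.
have -> : (W^-1 * x * A + a) / (2 * (A + a)) - (W + a)^-1 * x =
    ((a - x) * W * (W + a) + x * (W - A) * (W - a)) / (2 * (A + a) * W * (W + a)).
  by field; rewrite W_neq0 Wa_neq0 Aa_neq0.
apply: divr_ge0; last by rewrite !mulr_ge0 //; lra.
by rewrite addr_ge0 // !mulr_ge0 //; lra.
Qed.

Lemma replica_dummy (R : realFieldType) (T : finType) (f : {set T} -> R) (a b : T) :
    a != b ->
    (forall S U : {set T}, S \subset U -> f S <= f U) ->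
    (forall S U : {set T}, f S + f U <= f (S :|: U) + f (S :&: U)) ->
    (forall S : {set T}, f (S :|: [set a; b]) = f (S :|: [set a])) ->
    (forall S : {set T}, f (S :|: [set a]) = f (S :|: [set b])) ->
  forall S, f (a |: S) = f S.
Proof.
move=> ab f_mono f_super rep_ab rep_ba S.
have join : (S :|: [set a]) :|: (S :|: [set b]) = S :|: [set a; b].
  by rewrite setUACA setUid.
have meet : (S :|: [set a]) :&: (S :|: [set b]) = S.
  rewrite -setUIr; apply/setUidPl/subsetP => x; rewrite !inE => /andP[/eqP-> /eqP ab'].
  by rewrite ab' eqxx in ab.
have := f_super (S :|: [set a]) (S :|: [set b]).
rewrite join meet rep_ab -rep_ba setUC => le_fS.
have le_Sa := f_mono _ _ (subsetUr [set a] S).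
by apply/eqP; rewrite eq_le; apply/andP; split; lra.
Qed.

Section Parties.
Variable M : nat.

Lemma mem_partiesP (j : 'I_M) : Some j \in partiesP M.
Proof. exact: imset_f. Qed.

Lemma replica_notin_partiesP : None \notin partiesP M.
Proof. by apply/imsetP => -[]. Qed.

Lemma card_partiesP : #|partiesP M| = M.
Proof. by rewrite card_imset ?card_ord // => x y []. Qed.

Lemma setT_partiesP : [set: option 'I_M] = None |: partiesP M.
Proof. by apply/setP => -[j|]; rewrite !inE ?mem_partiesP ?orbT. Qed.

Lemma big_partiesP (R : nmodType) (F : option 'I_M -> R) :
  \sum_(j in partiesP M) F j = \sum_(j < M) F (Some j).
Proof. by rewrite big_imset //= => x y _ _ []. Qed.

End Parties.

Section ReplicatedGame.
Variables (R : realFieldType) (M : nat) (i : 'I_M) (D : {set 'I_M}).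
Variable g : option 'I_M -> {set option 'I_M} -> R.
Hypothesis g_mono : forall j (S T : {set option 'I_M}), S \subset T -> g j S <= g j T.
Hypothesis g_super : forall j (S T : {set option 'I_M}),
  g j S + g j T <= g j (S :|: T) + g j (S :&: T).
Hypothesis g_rep1 : forall j (T : {set option 'I_M}),
  g j (T :|: [set Some i; None]) = g j (T :|: [set Some i]).
Hypothesis g_rep2 : forall j (T : {set option 'I_M}),
  g j (T :|: [set Some i]) = g j (T :|: [set None]).
Hypothesis g_copy : g None = g (Some i).

Let w := wgame g D.

Lemma g_setU1_original j (S : {set option 'I_M}) : g j (Some i |: S) = g j S.
Proof. exact: replica_dummy (g_mono j) (g_super j) (g_rep1 j) (g_rep2 j) S. Qed.

Lemma g_setU1_replica j (S : {set option 'I_M}) : g j (None |: S) = g j S.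
Proof. by rewrite setUC -g_rep2 setUC g_setU1_original. Qed.

Lemma g_set1_original j : g j [set Some i] = g j set0.
Proof. by rewrite -[[set Some i]]setU0 g_setU1_original. Qed.

Lemma g_set1_replica j : g j [set None] = g j set0.
Proof. by rewrite -[[set None]]setU0 g_setU1_replica. Qed.

Lemma gain_ge0 j : 0 <= gain g j.
Proof. by rewrite subr_ge0 g_mono // sub1set mem_partiesP. Qed.

Lemma wgame_marginal (S : {set option 'I_M}) : Some i \notin S ->
  w (Some i |: S) - w S = g (Some i) S - g (Some i) [set Some i].
Proof.
move=> iS; rewrite /w /wgame big_setU1 //= g_setU1_original.
under eq_bigr do rewrite g_setU1_original.
under [X in _ + (_ + X)]eq_bigr do rewrite g_setU1_original.
by rewrite addrCA addrK.
Qed.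

Lemma wgame_marginal_replica (S : {set option 'I_M}) : Some i \notin S ->
  w (Some i |: (None |: S)) - w (None |: S) = w (Some i |: S) - w S.
Proof.
by move=> iS; rewrite !wgame_marginal ?g_setU1_replica // !inE negb_or iS andbT.
Qed.

Lemma wgame_marginal_bounds (S : {set option 'I_M}) : S \subset partiesP M :\ Some i ->
  0 <= w (Some i |: S) - w S <= gain g i.
Proof.
rewrite subsetD1 => /andP[sSP iS].
by rewrite wgame_marginal // /gain g_set1_original subr_ge0 lerD2r !g_mono ?sub0set.
Qed.

Lemma wgame_partiesP :
  w (partiesP M) = \sum_(j in D) g (Some j) (partiesP M) + \sum_(j < M) gain g j.
Proof. by rewrite /w /wgame big_partiesP. Qed.

Lemma wgame_setT : w [set: option 'I_M] = w (partiesP M) + gain g i.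
Proof.
rewrite setT_partiesP /w /wgame big_setU1 ?replica_notin_partiesP //= g_setU1_replica.
under eq_bigr do rewrite g_setU1_replica.
under [X in _ + (_ + X)]eq_bigr do rewrite g_setU1_replica.
by rewrite g_copy g_set1_replica -g_set1_original /gain [LHS]addrCA [LHS]addrC.
Qed.

End ReplicatedGame.

Theorem theorem2 (R : realFieldType) (M : nat) (i : 'I_M) (D : {set 'I_M})
  (g : option 'I_M -> {set option 'I_M} -> R)
  (hD : D != set0)
  (hnn : forall j S, 0 <= g j S)
  (hmono : forall j (S T : {set option 'I_M}), S \subset T -> g j S <= g j T)
  (hsuper : forall j (S T : {set option 'I_M}), g j S + g j T <= g j (S :|: T) + g j (S :&: T))
  (hrep1 : forall j (T : {set option 'I_M}), g j (T :|: [set Some i; None]) = g j (T :|: [set Some i]))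
  (hrep2 : forall j (T : {set option 'I_M}), g j (T :|: [set Some i]) = g j (T :|: [set None]))
  (hcopy : g None = g (Some i))
  (hDpos : 0 < \sum_(j in D) g (Some j) (partiesP M))
  (hA : 0 < \sum_(j < M) gain g j) :
  let A := \sum_(j < M) gain g j in
  let w := wgame g D in
  let phi := nshapley M (partiesP M) w (Some i) in
  let phiR := nshapley M.+1 [set: option 'I_M] w (Some i) in
  phiR <= (phi * A + gain g i) / (2 * (A + gain g i)).
Proof.
cbv zeta; set A := \sum_(j < M) gain g j.
have iP := mem_partiesP i.
have x_bounds : 0 <= shapley_sum M (partiesP M) (wgame g D) (Some i) <= gain g i.
  apply: shapley_sum_bounds iP (card_partiesP M) _ => S sSP.
  exact: (wgame_marginal_bounds D hmono hsuper hrep1 hrep2 sSP).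
rewrite nshapleyE (wgame_setT D hmono hsuper hrep1 hrep2 hcopy) setT_partiesP.
rewrite (shapley_sum_dummy iP (replica_notin_partiesP M) (card_partiesP M)) => [|S sSP].
  apply: replica_share_le x_bounds => //.
    rewrite /A (bigD1 i) //= lerDl; apply: sumr_ge0 => j _; exact: gain_ge0 hmono j.
  by rewrite wgame_partiesP lerDr ltW.
apply: (wgame_marginal_replica D hmono hsuper hrep1 hrep2).
by move: sSP; rewrite subsetD1 => /andP[].
Qed.
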